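(* Let $g>0$ and consider the one-dimensional shallow water system $$\partial_t h+\partial_x q=0,\qquad \partial_t q+\partial_x\Big(\frac{q^2}{h}+\tfrac12 g h^2\Big)=0,$$ with state $u=(h,q)$, $h>0$, $q=hv$. Let $u_l=(h_l,q_l)$ be a torrential state with $\mathcal{F}_l>1$ and $u_r=(h_r,q_r)$ a fluvial state with $|\mathcal{F}_r|<1$, where $\mathcal{F}=v/\sqrt{gh}$. Suppose that either $\mathcal{N}(u_l)\cap\mathcal{P}(u_r)$ intersects the subcritical set $\{(h,q):h>0,\ -h\sqrt{gh}\le q\le h\sqrt{gh}\}$, or $u_l\in\mathcal{P}(u_r)$. Then there exist states $u_1^b=(h_1^b,q_1^b)$, $u_2^b=(h_2^b,q_2^b)$ with $h_1^b,h_2^b>0$ such that $$u_1^b\in\mathcal{N}(u_l),\qquad u_2^b\in\mathcal{P}(u_r),\qquad q_1^b=q_2^b,\qquad h_1^b=h_2^b.$$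
   Context: This models a junction between one incoming canal (canal 1, initial constant state $u_l$) and one outgoing canal (canal 2, initial constant state $u_r$), with conservation of mass $q_1^b=q_2^b$ and equal water heights $h_1^b=h_2^b$ at the junction. The Froude number of a state $(h,q)$ is $\mathcal{F}=v/\sqrt{gh}=q/(h\sqrt{gh})$; a state is subcritical (fluvial) if $|\mathcal{F}|<1$ and supercritical (torrential) if $|\mathcal{F}|>1$. Riemann problems for the system are solved in the standard (Lax) sense, by a 1-wave and a 2-wave, each an admissible shock or a centered rarefaction (eigenvalues $\lambda_{1,2}=v\mp\sqrt{gh}$). For a state $u_l$, $\mathcal{N}(u_l)$ is the set of states $\hat u$ such that the solution of the Riemann problem with left state $u_l$ (for $x<0$) and right state $\hat u$ (for $x>0$) contains only waves with non-positive speed. For a state $u_r$, $\mathcal{P}(u_r)$ is the set of states $\tilde u$ such that the solution of the Riemann problem with left state $\tilde u$ and right state $u_r$ contains only waves with non-negative speed. *)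

From Stdlib Require Import Reals Lra.
Open Scope R_scope.

Definition state := (R * R)%type.
Definition hh (u : state) : R := fst u.
Definition qq (u : state) : R := snd u.
Definition vel (u : state) : R := qq u / hh u.

Definition is_state (u : state) : Prop := 0 < hh u.

Definition flux_h (u : state) : R := qq u.
Definition flux_q (g : R) (u : state) : R :=
  qq u ^ 2 / hh u + / 2 * g * hh u ^ 2.

Definition lambda1 (g : R) (u : state) : R := vel u - sqrt (g * hh u).
Definition lambda2 (g : R) (u : state) : R := vel u + sqrt (g * hh u).

Definition froude (g : R) (u : state) : R := qq u / (hh u * sqrt (g * hh u)).

Definition subcritical_set (g : R) (u : state) : Prop :=
  0 < hh u /\ - (hh u * sqrt (g * hh u)) <= qq u /\ qq u <= hh u * sqrt (g * hh u).

Definition rankine_hugoniot (g : R) (ul ur : state) (s : R) : Prop :=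
  flux_h ur - flux_h ul = s * (hh ur - hh ul) /\
  flux_q g ur - flux_q g ul = s * (qq ur - qq ul).

Definition shock1 (g : R) (ul ur : state) (s : R) : Prop :=
  ul <> ur /\ rankine_hugoniot g ul ur s /\
  lambda1 g ur < s < lambda1 g ul /\ s < lambda2 g ur.
Definition shock2 (g : R) (ul ur : state) (s : R) : Prop :=
  ul <> ur /\ rankine_hugoniot g ul ur s /\
  lambda2 g ur < s < lambda2 g ul /\ lambda1 g ul < s.

(* Centered rarefactions: ur lies on the integral curve of the i-th
   eigenvector through ul (the i-Riemann invariant is conserved:
   v + 2 sqrt(gh) for i = 1, v - 2 sqrt(gh) for i = 2), and the
   characteristic speed increases from left to right. *)
Definition rarefaction1 (g : R) (ul ur : state) : Prop :=
  vel ur + 2 * sqrt (g * hh ur) = vel ul + 2 * sqrt (g * hh ul) /\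
  lambda1 g ul < lambda1 g ur.
Definition rarefaction2 (g : R) (ul ur : state) : Prop :=
  vel ur - 2 * sqrt (g * hh ur) = vel ul - 2 * sqrt (g * hh ul) /\
  lambda2 g ul < lambda2 g ur.

(* An i-wave from ul to ur all of whose speeds satisfy P
   (a trivial wave ul = ur has no speed). For a rarefaction the speeds
   fill the interval [lambda_i(ul), lambda_i(ur)]. *)
Definition wave1 (g : R) (P : R -> Prop) (ul ur : state) : Prop :=
  ul = ur \/
  (rarefaction1 g ul ur /\
     forall x, lambda1 g ul <= x <= lambda1 g ur -> P x) \/
  (exists s, shock1 g ul ur s /\ P s).
Definition wave2 (g : R) (P : R -> Prop) (ul ur : state) : Prop :=
  ul = ur \/
  (rarefaction2 g ul ur /\
     forall x, lambda2 g ul <= x <= lambda2 g ur -> P x) \/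
  (exists s, shock2 g ul ur s /\ P s).

Definition riemann_waves (g : R) (P : R -> Prop) (ul ur : state) : Prop :=
  is_state ul /\ is_state ur /\
  exists um : state, is_state um /\ wave1 g P ul um /\ wave2 g P um ur.

Definition N_set (g : R) (ul : state) (u : state) : Prop :=
  riemann_waves g (fun s => s <= 0) ul u.

Definition P_set (g : R) (ur : state) (u : state) : Prop :=
  riemann_waves g (fun s => 0 <= s) u ur.

(* The boundary states are taken equal, u_1^b = u_2^b: in the first case the
   given point of N(u_l) ∩ P(u_r) works, in the second u_l itself, since the
   Riemann problem (u_l, u_l) is solved without any wave. *)
From Stdlib Require Import Reals.
Open Scope R_scope.

Lemma riemann_waves_refl (g : R) (P : R -> Prop) (u : state) :
  is_state u -> riemann_waves g P u u.
Proof.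
  intros Hu.
  split; [exact Hu | split; [exact Hu |]].
  exists u; split; [exact Hu | split; left; reflexivity].
Qed.

Lemma riemann_waves_is_state_r (g : R) (P : R -> Prop) (ul ur : state) :
  riemann_waves g P ul ur -> is_state ur.
Proof. intros [_ [Hur _]]; exact Hur. Qed.

Lemma N_set_refl (g : R) (ul : state) : is_state ul -> N_set g ul ul.
Proof. apply riemann_waves_refl. Qed.

Theorem mainTheorem2 (g hl ql hr qr : R) :
  0 < g -> 0 < hl -> 0 < hr ->
  1 < froude g (hl, ql) ->
  Rabs (froude g (hr, qr)) < 1 ->
  ((exists u : state,
      N_set g (hl, ql) u /\ P_set g (hr, qr) u /\ subcritical_set g u)
   \/ P_set g (hr, qr) (hl, ql)) ->
  exists h1b q1b h2b q2b : R,
    0 < h1b /\ 0 < h2b /\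
    N_set g (hl, ql) (h1b, q1b) /\ P_set g (hr, qr) (h2b, q2b) /\
    q1b = q2b /\ h1b = h2b.
Proof.
  intros _ Hl _ _ _ [[[h q] [HN [HP _]]] | HP].
  - assert (Hh : 0 < h) by exact (riemann_waves_is_state_r _ _ _ _ HN).
    exists h, q, h, q; tauto.
  - exists hl, ql, hl, ql.
    pose proof (N_set_refl g (hl, ql) Hl); tauto.
Qed.
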